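(* Let $H$ be a CAT($-1$) space and let $\Phi\in\mathcal{H}$ be such that $\Phi$ and its flip $\hat\Phi$ are Hölder (of some exponent) with Hölder constants at most $L$, and $|\Phi|\leq L$. Then there exists a function $D:\mathbb{R}_{\geq0}\to\mathbb{R}$ such that for any two geodesics $\gamma_1,\gamma_2\in SH$, any $r\geq 0$ and any $t_1,t_2\in\mathbb{R}$ with $d(\gamma_1(0),\gamma_2(0))\leq r$ and $d(\gamma_1(t_1),\gamma_2(t_2))\leq r$, we have $|d^\Phi(\gamma_1(0),\gamma_1(t_1))-d^\Phi(\gamma_2(0),\gamma_2(t_2))|\leq D(r)$.
   Context: $SH$ is the space of unit speed bi-infinite geodesics $\gamma:\mathbb{R}\to H$ with metric $\operatorname{dist}(\gamma_1,\gamma_2)=\frac12\int_{-\infty}^{\infty}d(\gamma_1(t),\gamma_2(t))e^{-|t|}dt$ and geodesic flow $\mathsf g^t\gamma(s)=\gamma(s+t)$; every geodesic segment is assumed to extend to a bi-infinite geodesic. The flip of $\gamma$ is $-\gamma(t)=\gamma(-t)$ and $\hat\Phi(\gamma)=\Phi(-\gamma)$. $\mathcal{H}$ is the set of bounded Hölder functions $\Phi:(SH,\operatorname{dist})\to\mathbb{R}$ with $\Phi(\gamma_1)=\Phi(\gamma_2)$ whenever $\gamma_1|_{[0,\epsilon]}=\gamma_2|_{[0,\epsilon]}$ for some $\epsilon>0$. For $p\neq q$, $d^\Phi(p,q)=\int_0^{d(p,q)}\Phi(\mathsf g^t\gamma_{p,q})dt$ where $\gamma_{p,q}\in SH$ is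 any geodesic with $\gamma_{p,q}(0)=p$, $\gamma_{p,q}(d(p,q))=q$ (and $d^\Phi(p,p)=0$). *)

From Stdlib Require Import Reals Lra ClassicalEpsilon.
From Coquelicot Require Import Coquelicot.
Open Scope R_scope.

Definition is_metric {X : Type} (d : X -> X -> R) : Prop :=
  (forall x y, 0 <= d x y) /\
  (forall x y, d x y = 0 <-> x = y) /\
  (forall x y, d x y = d y x) /\
  (forall x y z, d x z <= d x y + d y z).

(** The hyperbolic plane H^2 (curvature -1), upper half-plane model:
    points (a,b) with b > 0, distance arcosh(1 + |z-w|^2/(2 Im z Im w)). *)
Definition H2pt := { z : R * R | 0 < snd z }.
Definition arcosh (u : R) : R := ln (u + sqrt (u * u - 1)).
Definition dH2 (z w : H2pt) : R :=
  let (a, b) := proj1_sig z in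
  let (c, e) := proj1_sig w in
  arcosh (1 + ((a - c) ^ 2 + (b - e) ^ 2) / (2 * b * e)).

(** sigma : [0, d a b] -> X is a geodesic segment from a to b
    (parametrized by arc length; values outside [0, d a b] irrelevant). *)
Definition geod_seg {X : Type} (d : X -> X -> R) (sigma : R -> X) (a b : X) : Prop :=
  sigma 0 = a /\ sigma (d a b) = b /\
  forall s t, 0 <= s <= d a b -> 0 <= t <= d a b ->
    d (sigma s) (sigma t) = Rabs (s - t).

Definition geodesic_space {X : Type} (d : X -> X -> R) : Prop :=
  forall a b : X, exists sigma, geod_seg d sigma a b.

(** x lies on the side sigma (from a to b) and x' is its comparison point on the
    side of the comparison triangle from a' to b' in H^2. *)
Definition on_side_cmp {X : Type} (d : X -> X -> R) (sigma : R -> X) (a b : X)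
  (a' b' : H2pt) (x : X) (x' : H2pt) : Prop :=
  exists s, 0 <= s <= d a b /\ x = sigma s /\
    dH2 a' x' = s /\ dH2 x' b' = d a b - s.

Definition CAT_m1 {X : Type} (d : X -> X -> R) : Prop :=
  is_metric d /\ geodesic_space d /\
  forall (p q r : X) (s1 s2 s3 : R -> X),
    geod_seg d s1 p q -> geod_seg d s2 q r -> geod_seg d s3 r p ->
    forall p' q' r' : H2pt,
      dH2 p' q' = d p q -> dH2 q' r' = d q r -> dH2 r' p' = d r p ->
      forall (x y : X) (x' y' : H2pt),
        (on_side_cmp d s1 p q p' q' x x' \/ on_side_cmp d s2 q r q' r' x x' \/
         on_side_cmp d s3 r p r' p' x x') ->
        (on_side_cmp d s1 p q p' q' y y' \/ on_side_cmp d s2 q r q' r' y y' \/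
         on_side_cmp d s3 r p r' p' y y') ->
        d x y <= dH2 x' y'.

Definition inSH {X : Type} (d : X -> X -> R) (g : R -> X) : Prop :=
  forall s t, d (g s) (g t) = Rabs (s - t).

Definition geodesically_complete {X : Type} (d : X -> X -> R) : Prop :=
  forall (sigma : R -> X) (a b : X), geod_seg d sigma a b ->
    exists g, inSH d g /\ forall t, 0 <= t <= d a b -> g t = sigma t.

Definition distSH {X : Type} (d : X -> X -> R) (g1 g2 : R -> X) : R :=
  / 2 * RInt_gen (fun t => d (g1 t) (g2 t) * exp (- Rabs t))
          (Rbar_locally m_infty) (Rbar_locally p_infty).

Definition gflow {X : Type} (t : R) (g : R -> X) : R -> X := fun s => g (s + t).
Definition flip {X : Type} (g : R -> X) : R -> X := fun t => g (- t).
Definition hatPhi {X : Type} (Phi : (R -> X) -> R) : (R -> X) -> R :=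
  fun g => Phi (flip g).

(** x^a for x >= 0, a > 0 (with 0^a = 0). *)
Definition rpow (x a : R) : R := if Rle_dec x 0 then 0 else Rpower x a.

Definition holder_SH {X : Type} (d : X -> X -> R) (Phi : (R -> X) -> R)
  (a C : R) : Prop :=
  forall g1 g2, inSH d g1 -> inSH d g2 ->
    Rabs (Phi g1 - Phi g2) <= C * rpow (distSH d g1 g2) a.

Definition in_calH {X : Type} (d : X -> X -> R) (Phi : (R -> X) -> R) : Prop :=
  (exists M, forall g, inSH d g -> Rabs (Phi g) <= M) /\
  (exists a C, 0 < a <= 1 /\ holder_SH d Phi a C) /\
  (forall g1 g2, inSH d g1 -> inSH d g2 ->
     (exists eps, 0 < eps /\ forall t, 0 <= t <= eps -> g1 t = g2 t) ->
     Phi g1 = Phi g2).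

(** d^Phi(p,q) = int_0^{d(p,q)} Phi(g^t gamma_{p,q}) dt, with gamma_{p,q}
    any geodesic in SH with gamma(0)=p, gamma(d(p,q))=q (chosen by epsilon). *)
Definition gamma_pq {X : Type} (d : X -> X -> R) (p q : X) : R -> X :=
  epsilon (inhabits (fun _ : R => p))
    (fun g => inSH d g /\ g 0 = p /\ g (d p q) = q).

Definition dPhi {X : Type} (d : X -> X -> R) (Phi : (R -> X) -> R) (p q : X) : R :=
  match excluded_middle_informative (p = q) with
  | left _ => 0
  | right _ => RInt (fun t => Phi (gflow t (gamma_pq d p q))) 0 (d p q)
  end.

From Stdlib Require Import Reals Lra Psatz ClassicalEpsilon FunctionalExtensionality.
From Coquelicot Require Import Coquelicot.
Open Scope R_scope.

(* Let the endpoints of two geodesic segments of lengths T1, T2 be r-close.  In a CAT(-1) space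
   the segments fellow-travel exponentially: after a time shift c with |c| <= r,
   d(e1 v, e2 (v + c)) <= K(r) (exp (- v / 2) + exp ((v - T1) / 2)) for all v.  Away from the
   ends this comes from comparing the two thin triangles cut out by a diagonal with triangles
   in H^2; near the ends the triangle inequality suffices.  Since the distance on SH weights
   d(g1 u, g2 u) by exp (- |u|), the same bound holds in SH for the geodesics flowed for time v,
   so by Hölder continuity |Phi (g^v e1) - Phi (g^v e2)| is bounded by an integrable function
   of v whose integral over [0, T1] does not depend on T1.  The two integration intervals
   differ at each end by at most r, which costs at most 2 r L since |Phi| <= L. *)

(** * Hyperbolic functions and the hyperbolic plane *)

Lemma exp_le_exp_of_le x y : x <= y -> exp x <= exp y.
Proof. intros [Hlt | ->]; [left; apply exp_increasing | right]; auto. Qed.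

Lemma exp_neq_0 x : exp x <> 0.
Proof. apply Rgt_not_eq, exp_pos. Qed.

Lemma cosh_sqr t : cosh t * cosh t = 1 + sinh t * sinh t.
Proof. unfold cosh, sinh. rewrite exp_Ropp. field. apply exp_neq_0. Qed.

Lemma cosh_plus_sinh t : cosh t + sinh t = exp t.
Proof. unfold cosh, sinh. field. Qed.

Lemma cosh_add x y : cosh (x + y) = cosh x * cosh y + sinh x * sinh y.
Proof.
  unfold cosh, sinh. rewrite Ropp_plus_distr, !exp_plus, !exp_Ropp.
  field; split; apply exp_neq_0.
Qed.

Lemma cosh_sub x y : cosh (x - y) = cosh x * cosh y - sinh x * sinh y.
Proof.
  unfold cosh, sinh, Rminus. rewrite Ropp_plus_distr, Ropp_involutive, !exp_plus, !exp_Ropp.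
  field; split; apply exp_neq_0.
Qed.

Lemma cosh_Ropp t : cosh (- t) = cosh t.
Proof. unfold cosh. rewrite Ropp_involutive. field. Qed.

Lemma cosh_Rabs t : cosh (Rabs t) = cosh t.
Proof. unfold Rabs. destruct (Rcase_abs t); [apply cosh_Ropp | reflexivity]. Qed.

Lemma sinh_gt_0 t : 0 < t -> 0 < sinh t.
Proof. intros Ht. rewrite <- sinh_0. apply sinh_lt, Ht. Qed.

Lemma sinh_ge_0 t : 0 <= t -> 0 <= sinh t.
Proof. intros [Ht | <-]; [left; apply sinh_gt_0, Ht | rewrite sinh_0; lra]. Qed.

Lemma cosh_ge_1 t : 1 <= cosh t.
Proof.
  assert (0 < cosh t) by (unfold cosh; pose proof (exp_pos t); pose proof (exp_pos (- t)); lra).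
  pose proof (cosh_sqr t). nra.
Qed.

Lemma Rabs_sinh_lt_cosh t : Rabs (sinh t) < cosh t.
Proof.
  unfold cosh, sinh. pose proof (exp_pos t); pose proof (exp_pos (- t)).
  apply Rabs_def1; lra.
Qed.

Lemma cosh_le x y : 0 <= x <= y -> cosh x <= cosh y.
Proof.
  intros Hxy. replace y with (x + (y - x)) by ring. rewrite cosh_add.
  pose proof (cosh_ge_1 x); pose proof (cosh_ge_1 (y - x)).
  pose proof (sinh_ge_0 x); pose proof (sinh_ge_0 (y - x)). nra.
Qed.

Lemma arcosh_cosh t : 0 <= t -> arcosh (cosh t) = t.
Proof.
  intros Ht. unfold arcosh. rewrite cosh_sqr.
  replace (1 + sinh t * sinh t - 1) with (sinh t * sinh t) by ring.
  rewrite sqrt_square by (apply sinh_ge_0, Ht).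
  rewrite cosh_plus_sinh. apply ln_exp.
Qed.

Lemma arcosh_1_plus_le x A : 0 <= x <= A ->
  arcosh (1 + x) <= sqrt x * (sqrt A + sqrt (A + 2)).
Proof.
  intros Hx. unfold arcosh.
  replace ((1 + x) * (1 + x) - 1) with (x * (x + 2)) by ring.
  rewrite sqrt_mult by lra.
  pose proof (sqrt_pos x); pose proof (sqrt_pos (x + 2)).
  assert (Hln := exp_ineq1_le (ln (1 + x + sqrt x * sqrt (x + 2)))).
  rewrite exp_ln in Hln by nra.
  assert (x <= sqrt x * sqrt A).
  { rewrite <- (sqrt_sqrt x) at 1 by lra.
    apply Rmult_le_compat_l; [lra | apply sqrt_le_1_alt; lra]. }
  assert (sqrt (x + 2) <= sqrt (A + 2)) by (apply sqrt_le_1_alt; lra).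
  nra.
Qed.

Lemma sinh_le_exp_mul_sinh v T : 0 <= v <= T -> sinh v <= exp (v - T) * sinh T.
Proof.
  intros Hv. unfold sinh.
  replace (exp (v - T) * ((exp T - exp (- T)) / 2))
    with ((exp (v - T) * exp T - exp (v - T) * exp (- T)) / 2) by field.
  rewrite <- !exp_plus. replace (v - T + T) with v by ring.
  pose proof (exp_le_exp_of_le (v - T + - T) (- v) ltac:(lra)). lra.
Qed.

Definition polar_den (t c : R) : R := cosh t - sinh t * c.

Lemma polar_den_pos t c : -1 <= c <= 1 -> 0 < polar_den t c.
Proof.
  intros Hc. unfold polar_den. pose proof (Rabs_sinh_lt_cosh t).
  assert (sinh t * c <= Rabs (sinh t)).
  { destruct (Rle_dec 0 (sinh t)).
    - rewrite Rabs_right by lra. nra.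
    - rewrite Rabs_left by lra. nra. }
  lra.
Qed.

(* For [c^2 + s^2 = 1], [h2_polar t c s] is the point at distance [t] from [i] = (0, 1) in the
   direction of the angle with cosine [c] and sine [s]. *)
Definition h2_polar (t c s : R) (Hc : -1 <= c <= 1) : H2pt :=
  exist (fun z : R * R => 0 < snd z) (sinh t * s / polar_den t c, / polar_den t c)
        (Rinv_0_lt_compat _ (polar_den_pos t c Hc)).

Lemma h2_polar_dist_identity a1 b1 c1 s1 a2 b2 c2 s2 :
  b1 * b1 = 1 + a1 * a1 -> b2 * b2 = 1 + a2 * a2 ->
  c1 * c1 + s1 * s1 = 1 -> c2 * c2 + s2 * s2 = 1 ->
  0 < b1 - a1 * c1 -> 0 < b2 - a2 * c2 ->
  1 + ((a1 * s1 / (b1 - a1 * c1) - a2 * s2 / (b2 - a2 * c2)) ^ 2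
       + (/ (b1 - a1 * c1) - / (b2 - a2 * c2)) ^ 2)
      / (2 * / (b1 - a1 * c1) * / (b2 - a2 * c2))
  = b1 * b2 - a1 * a2 * (c1 * c2 + s1 * s2).
Proof.
  intros h1 h2 h3 h4 p1 p2.
  set (D1 := b1 - a1 * c1) in *. set (D2 := b2 - a2 * c2) in *.
  assert (k1 : a1 * a1 * (s1 * s1) + 1 = D1 * (b1 + a1 * c1)).
  { replace (s1 * s1) with (1 - c1 * c1) by lra. unfold D1. nra. }
  assert (k2 : a2 * a2 * (s2 * s2) + 1 = D2 * (b2 + a2 * c2)).
  { replace (s2 * s2) with (1 - c2 * c2) by lra. unfold D2. nra. }
  replace (1 + ((a1 * s1 / D1 - a2 * s2 / D2) ^ 2 + (/ D1 - / D2) ^ 2) / (2 * / D1 * / D2))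
    with (1 + (D2 * D2 * (a1 * a1 * (s1 * s1) + 1) + D1 * D1 * (a2 * a2 * (s2 * s2) + 1)
               - 2 * a1 * a2 * s1 * s2 * D1 * D2 - 2 * D1 * D2) / (2 * D1 * D2))
    by (field; lra).
  rewrite k1, k2. unfold D1, D2 in *. field. lra.
Qed.

Lemma dH2_polar t1 c1 s1 H1 t2 c2 s2 H2 :
  c1 * c1 + s1 * s1 = 1 -> c2 * c2 + s2 * s2 = 1 ->
  dH2 (h2_polar t1 c1 s1 H1) (h2_polar t2 c2 s2 H2) =
  arcosh (cosh t1 * cosh t2 - sinh t1 * sinh t2 * (c1 * c2 + s1 * s2)).
Proof.
  intros e1 e2. unfold dH2, h2_polar; simpl. f_equal.
  pose proof (polar_den_pos t1 c1 H1); pose proof (polar_den_pos t2 c2 H2).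
  unfold polar_den in *. unfold Rdiv at 1 2. rewrite <- !Rdiv_def.
  apply h2_polar_dist_identity; auto using cosh_sqr.
Qed.

Lemma dH2_polar_abs t1 c1 s1 H1 t2 c2 s2 H2 :
  c1 * c1 + s1 * s1 = 1 -> c2 * c2 + s2 * s2 = 1 ->
  sinh t1 * sinh t2 * (1 - (c1 * c2 + s1 * s2)) = 0 ->
  dH2 (h2_polar t1 c1 s1 H1) (h2_polar t2 c2 s2 H2) = Rabs (t1 - t2).
Proof.
  intros e1 e2 Hdir. rewrite dH2_polar by auto.
  replace (cosh t1 * cosh t2 - sinh t1 * sinh t2 * (c1 * c2 + s1 * s2)) with (cosh (t1 - t2))
    by (rewrite cosh_sub; lra).
  rewrite <- cosh_Rabs. apply arcosh_cosh, Rabs_pos.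
Qed.

(** * Geodesics and fans of geodesics in CAT(-1) spaces *)

Lemma Rabs_dist_sub_le {X} (d : X -> X -> R) a b c e : is_metric d ->
  Rabs (d a b - d c e) <= d a c + d b e.
Proof.
  intros (_ & _ & Hsym & Htri). apply Rabs_le.
  pose proof (Htri c a e); pose proof (Htri a b e); pose proof (Htri a c b); pose proof (Htri c e b).
  rewrite (Hsym c a), (Hsym e b) in *. lra.
Qed.

Lemma dist_sides_bounds {X} (d : X -> X -> R) p x1 x2 : is_metric d ->
  Rabs (d p x1 - d p x2) <= d x1 x2 <= d p x1 + d p x2.
Proof.
  intros HM. pose proof HM as (_ & Hzero & Hsym & Htri). split.
  - eapply Rle_trans; [apply Rabs_dist_sub_le, HM|].
    rewrite (proj2 (Hzero p p) eq_refl). lra.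
  - rewrite (Hsym p x1). apply Htri.
Qed.

Lemma geod_seg_rev {X} (d : X -> X -> R) sigma a b : is_metric d -> geod_seg d sigma a b ->
  geod_seg d (fun t => sigma (d a b - t)) b a.
Proof.
  intros (_ & _ & Hsym & _) (H0 & H1 & Hiso). unfold geod_seg. rewrite (Hsym b a).
  split; [|split].
  - rewrite Rminus_0_r. exact H1.
  - rewrite Rminus_diag. exact H0.
  - intros s t Hs Ht. rewrite Hiso by lra.
    replace (d a b - s - (d a b - t)) with (- (s - t)) by ring. apply Rabs_Ropp.
Qed.

Lemma inSH_geod_seg {X} (d : X -> X -> R) g T : 0 <= T -> inSH d g -> geod_seg d g (g 0) (g T).
Proof.
  intros HT Hg. unfold geod_seg.
  replace (d (g 0) (g T)) with T by (rewrite Hg, Rabs_left1; lra).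
  split; [reflexivity | split; [reflexivity | intros; apply Hg]].
Qed.

Lemma inSH_dist_le {X} (d : X -> X -> R) e1 e2 v w a1 a2 : is_metric d ->
  inSH d e1 -> inSH d e2 ->
  d (e1 v) (e2 w) <= Rabs (v - a1) + d (e1 a1) (e2 a2) + Rabs (a2 - w).
Proof.
  intros (_ & _ & _ & Htri) H1 H2. rewrite <- (H1 v a1), <- (H2 a2 w).
  pose proof (Htri (e1 v) (e1 a1) (e2 w)); pose proof (Htri (e1 a1) (e2 a2) (e2 w)). lra.
Qed.

(* The hyperbolic law of cosines for a triangle in H^2 with sides [T1], [T2] at the apex and
   opposite side [c] gives this as the cosine of the apex angle. *)
Definition cmp_cos (T1 T2 c : R) : R := (cosh T1 * cosh T2 - cosh c) / (sinh T1 * sinh T2).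

Lemma cmp_cos_bounds T1 T2 c : 0 < T1 -> 0 < T2 -> Rabs (T1 - T2) <= c <= T1 + T2 ->
  -1 <= cmp_cos T1 T2 c <= 1.
Proof.
  intros H1 H2 Hc. pose proof (sinh_gt_0 T1 H1); pose proof (sinh_gt_0 T2 H2).
  assert (cosh c <= cosh (T1 + T2)) by (apply cosh_le; pose proof (Rabs_pos (T1 - T2)); lra).
  assert (cosh (T1 - T2) <= cosh c) by (rewrite <- cosh_Rabs; apply cosh_le; split; [apply Rabs_pos | lra]).
  rewrite cosh_add in *. rewrite cosh_sub in *. unfold cmp_cos.
  split; [apply Rle_div_r | apply Rle_div_l]; nra.
Qed.

Lemma one_sub_cmp_cos_le T1 T2 c r : 0 < T1 -> 0 < T2 -> 0 <= c <= r ->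
  1 - cmp_cos T1 T2 c <= (cosh r - 1) / (sinh T1 * sinh T2).
Proof.
  intros H1 H2 Hc. pose proof (sinh_gt_0 T1 H1); pose proof (sinh_gt_0 T2 H2).
  assert (cosh c <= cosh r) by (apply cosh_le; lra).
  pose proof (cosh_ge_1 (T1 - T2)). rewrite cosh_sub in *.
  unfold cmp_cos. apply Rle_div_r; [nra|].
  replace ((1 - (cosh T1 * cosh T2 - cosh c) / (sinh T1 * sinh T2)) * (sinh T1 * sinh T2))
    with (sinh T1 * sinh T2 - (cosh T1 * cosh T2 - cosh c)) by (field; lra).
  lra.
Qed.

Lemma cat_m1_fan_cmp {X} (d : X -> X -> R) p x1 x2 s1 s2 v : CAT_m1 d ->
  geod_seg d s1 p x1 -> geod_seg d s2 p x2 -> 0 < d p x1 -> 0 < d p x2 ->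
  0 <= v <= d p x1 -> v <= d p x2 ->
  d (s1 v) (s2 v) <=
  arcosh (cosh v * cosh v - sinh v * sinh v * cmp_cos (d p x1) (d p x2) (d x1 x2)).
Proof.
  intros HC G1 G2 HT1 HT2 Hv1 Hv2.
  destruct HC as [HM [HG HT]]. pose proof HM as (Hpos & _ & Hsym & _).
  set (T1 := d p x1) in *. set (T2 := d p x2) in *. set (k := cmp_cos T1 T2 (d x1 x2)).
  assert (Hk : -1 <= k <= 1)
    by (apply cmp_cos_bounds, dist_sides_bounds; auto).
  set (sk := sqrt (1 - k * k)).
  assert (Hsk : k * k + sk * sk = 1) by (unfold sk; rewrite sqrt_sqrt by nra; ring).
  assert (H10 : -1 <= 1 <= 1) by lra.
  assert (e10 : 1 * 1 + 0 * 0 = 1) by ring.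
  (* Comparison triangle: apex [i], [x1] at distance [T1] in direction 0, [x2] at distance
     [T2] in the direction with cosine [k]. *)
  set (P' := h2_polar 0 1 0 H10). set (Q' := h2_polar T1 1 0 H10).
  set (R' := h2_polar T2 k sk Hk).
  set (X' := h2_polar v 1 0 H10). set (Y' := h2_polar v k sk Hk).
  destruct (HG x1 x2) as [s12 G12].
  pose proof (geod_seg_rev d s2 p x2 HM G2) as G3. fold T2 in G3.
  assert (HPQ : dH2 P' Q' = d p x1).
  { unfold P', Q'. rewrite dH2_polar_abs, Rabs_left1 by (rewrite ?sinh_0; lra). fold T1; ring. }
  assert (HQR : dH2 Q' R' = d x1 x2).
  { unfold Q', R'. rewrite dH2_polar by auto.
    replace (cosh T1 * cosh T2 - sinh T1 * sinh T2 * (1 * k + 0 * sk)) with (cosh (d x1 x2)).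
    - apply arcosh_cosh, Hpos.
    - pose proof (sinh_gt_0 T1 HT1); pose proof (sinh_gt_0 T2 HT2).
      unfold k, cmp_cos. field. lra. }
  assert (HRP : dH2 R' P' = d x2 p).
  { unfold R', P'. rewrite dH2_polar_abs, Rabs_right, Hsym by (rewrite ?sinh_0; lra).
    fold T2; ring. }
  assert (HX : on_side_cmp d s1 p x1 P' Q' (s1 v) X').
  { exists v. fold T1. split; [lra | split; [reflexivity | split]].
    - unfold P', X'. rewrite dH2_polar_abs, Rabs_left1 by (rewrite ?sinh_0; lra). ring.
    - unfold X', Q'. rewrite dH2_polar_abs, Rabs_left1 by lra. ring. }
  assert (HY : on_side_cmp d (fun t => s2 (T2 - t)) x2 p R' P' (s2 v) Y').
  { exists (T2 - v). rewrite (Hsym x2 p). fold T2.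
    split; [lra | split; [f_equal; ring | split]].
    - unfold R', Y'. rewrite dH2_polar_abs, Rabs_right by (rewrite ?Hsk; lra). ring.
    - unfold Y', P'. rewrite dH2_polar_abs, Rabs_right by (rewrite ?sinh_0; lra). ring. }
  pose proof (HT p x1 x2 s1 s12 (fun t => s2 (T2 - t)) G1 G12 G3 P' Q' R' HPQ HQR HRP
     (s1 v) (s2 v) X' Y' (or_introl HX) (or_intror (or_intror HY))) as Hcmp.
  unfold X', Y' in Hcmp. rewrite dH2_polar in Hcmp by auto.
  replace (1 * k + 0 * sk) with k in Hcmp by ring. exact Hcmp.
Qed.

Definition Cfan (r : R) : R :=
  sqrt (cosh r - 1) * (sqrt (cosh r - 1) + sqrt (cosh r - 1 + 2)).

Lemma Cfan_ge_0 r : 0 <= Cfan r.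
Proof.
  unfold Cfan. pose proof (sqrt_pos (cosh r - 1)); pose proof (sqrt_pos (cosh r - 1 + 2)). nra.
Qed.

Lemma fan_arcosh_le T1 T2 c r v :
  0 < T1 -> 0 < T2 -> Rabs (T1 - T2) <= c <= T1 + T2 -> c <= r ->
  0 <= v <= T1 -> v <= T2 ->
  arcosh (cosh v * cosh v - sinh v * sinh v * cmp_cos T1 T2 c)
    <= Cfan r * exp (v - (T1 + T2) / 2).
Proof.
  intros H1 H2 Hc Hcr Hv1 Hv2.
  pose proof (sinh_gt_0 T1 H1); pose proof (sinh_gt_0 T2 H2); pose proof (sinh_ge_0 v (proj1 Hv1)).
  pose proof (Rabs_pos (T1 - T2)).
  set (A := cosh r - 1). set (E := exp (v - (T1 + T2) / 2)).
  set (x := sinh v * sinh v * (1 - cmp_cos T1 T2 c)).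
  replace (cosh v * cosh v - sinh v * sinh v * cmp_cos T1 T2 c) with (1 + x)
    by (unfold x; rewrite cosh_sqr; ring).
  assert (Hk0 : 0 <= 1 - cmp_cos T1 T2 c) by (pose proof (cmp_cos_bounds T1 T2 c H1 H2 Hc); lra).
  assert (Hk1 : 1 - cmp_cos T1 T2 c <= A / (sinh T1 * sinh T2))
    by (apply one_sub_cmp_cos_le; lra).
  assert (HE : 0 < E <= 1).
  { split; [apply exp_pos|]. rewrite <- exp_0. apply exp_le_exp_of_le. lra. }
  assert (Hsv : sinh v * sinh v <= E * E * (sinh T1 * sinh T2)).
  { replace (E * E) with (exp (v - T1) * exp (v - T2))
      by (unfold E; rewrite <- !exp_plus; f_equal; field).
    pose proof (sinh_le_exp_mul_sinh v T1 ltac:(lra)).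
    pose proof (sinh_le_exp_mul_sinh v T2 ltac:(lra)).
    pose proof (exp_pos (v - T1)); pose proof (exp_pos (v - T2)). nra. }
  assert (HxA : x <= E * E * A).
  { apply Rle_trans with (E * E * (sinh T1 * sinh T2) * (A / (sinh T1 * sinh T2))).
    - unfold x. apply Rmult_le_compat; nra.
    - right. field. lra. }
  assert (HA : 0 <= A) by (unfold A; pose proof (cosh_ge_1 r); lra).
  assert (Hx : 0 <= x) by (unfold x; nra).
  assert (E * E * A <= A) by (assert (E * E <= 1) by nra; nra).
  eapply Rle_trans; [apply arcosh_1_plus_le with (A := A); lra|].
  assert (sqrt x <= E * sqrt A).
  { rewrite <- (sqrt_square E) by lra. rewrite <- sqrt_mult_alt by nra.
    apply sqrt_le_1_alt. lra. }
  unfold Cfan. fold A. pose proof (sqrt_pos A); pose proof (sqrt_pos (A + 2)). nra.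
Qed.

Lemma cat_m1_fan_le {X} (d : X -> X -> R) p x1 x2 s1 s2 r v : CAT_m1 d ->
  geod_seg d s1 p x1 -> geod_seg d s2 p x2 -> d x1 x2 <= r ->
  0 <= v -> v <= d p x1 -> v <= d p x2 ->
  d (s1 v) (s2 v) <= Cfan r * exp (v - (d p x1 + d p x2) / 2).
Proof.
  intros HC G1 G2 Hr Hv V1 V2.
  pose proof HC as [HM _]. pose proof HM as (Hpos & Hzero & _).
  destruct (Rle_lt_or_eq_dec 0 (d p x1) (Hpos p x1)) as [T1 | T1];
  destruct (Rle_lt_or_eq_dec 0 (d p x2) (Hpos p x2)) as [T2 | T2].
  2-4: replace v with 0 by lra; destruct G1 as [-> _], G2 as [-> _];
    rewrite (proj2 (Hzero p p) eq_refl);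
    apply Rmult_le_pos; [apply Cfan_ge_0 | left; apply exp_pos].
  eapply Rle_trans; [apply (cat_m1_fan_cmp d p x1 x2 s1 s2 v HC); auto; lra|].
  apply fan_arcosh_le; auto using dist_sides_bounds; lra.
Qed.

(** * Shadowing *)

Lemma linear_le_exp_half r v : 0 <= r -> v <= r ->
  2 * r + 2 * Rabs v <= (2 * r + 4) * exp r * exp (- v / 2).
Proof.
  intros Hr Hv. rewrite Rmult_assoc, <- exp_plus.
  pose proof (exp_ineq1_le (Rabs v / 2)).
  assert (exp (Rabs v / 2) <= exp (r + - v / 2)).
  { apply exp_le_exp_of_le. unfold Rabs. destruct (Rcase_abs v); lra. }
  pose proof (Rabs_pos v). nra.
Qed.

Lemma inSH_diagonal_bounds {X} (d : X -> X -> R) e1 e2 T1 T2 r : is_metric d ->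
  inSH d e1 -> inSH d e2 -> 0 <= T1 -> 0 <= T2 ->
  d (e1 0) (e2 0) <= r -> d (e1 T1) (e2 T2) <= r ->
  Rabs (T2 - d (e1 0) (e2 T2)) <= r /\ Rabs (d (e1 0) (e2 T2) - T1) <= r.
Proof.
  intros HM H1 H2 HT1 HT2 Hp Hq. pose proof HM as (_ & Hzero & Hsym & _). split.
  - replace T2 with (d (e2 0) (e2 T2)) at 1 by (rewrite H2, Rabs_left1; lra).
    eapply Rle_trans; [apply Rabs_dist_sub_le, HM|].
    rewrite (proj2 (Hzero _ _) eq_refl), Hsym. lra.
  - replace T1 with (d (e1 0) (e1 T1)) by (rewrite H1, Rabs_left1; lra).
    eapply Rle_trans; [apply Rabs_dist_sub_le, HM|].
    rewrite (proj2 (Hzero _ _) eq_refl), Hsym. lra.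
Qed.

Definition Kshadow (r : R) : R := (2 * r + 4) * exp r + Cfan r * exp (r / 2).

Section Shadowing.

Variables (X : Type) (d : X -> X -> R).
Hypothesis HC : CAT_m1 d.

Lemma cat_m1_shadow_middle e1 e2 z T1 T2 r v :
  inSH d e1 -> inSH d e2 -> 0 <= T1 -> 0 <= T2 -> geod_seg d z (e1 0) (e2 T2) ->
  d (e1 0) (e2 0) <= r -> d (e1 T1) (e2 T2) <= r ->
  let T3 := d (e1 0) (e2 T2) in
  0 <= v <= T1 -> v <= T3 -> T3 - T2 <= v ->
  d (e1 v) (e2 (v + (T2 - T3))) <= Cfan r * exp (r / 2) * (exp (- v / 2) + exp ((v - T1) / 2)).
Proof.
  intros H1 H2 HT1 HT2 Gz Hp Hq T3 Hv1 Hv3 Hv2.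
  (* Two fans share the diagonal [z]: at [e1 0] with [e1], and at [e2 T2] with [e2] reversed. *)
  pose proof HC as [HM _]. pose proof HM as (_ & _ & Hsym & Htri).
  destruct (inSH_diagonal_bounds d e1 e2 T1 T2 r HM H1 H2 HT1 HT2 Hp Hq) as [HT23 HT31].
  fold T3 in HT23, HT31.
  assert (A1 : d (e1 v) (z v) <= Cfan r * exp (v - (T1 + T3) / 2)).
  { replace T1 with (d (e1 0) (e1 T1)) at 1 by (rewrite H1, Rabs_left1; lra).
    apply (cat_m1_fan_le d); auto using inSH_geod_seg;
      rewrite ?H1, ?Rabs_left1; fold T3; lra. }
  assert (A2 : d (z v) (e2 (v + (T2 - T3))) <= Cfan r * exp (T3 - v - (T3 + T2) / 2)).
  { pose proof (geod_seg_rev d z _ _ HM Gz) as Rz.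
    pose proof (geod_seg_rev d e2 _ _ HM (inSH_geod_seg d e2 T2 HT2 H2)) as R2.
    fold T3 in Rz. replace (d (e2 0) (e2 T2)) with T2 in R2 by (rewrite H2, Rabs_left1; lra).
    replace (T3 - v - (T3 + T2) / 2) with (T3 - v - (d (e2 T2) (e1 0) + d (e2 T2) (e2 0)) / 2)
      by (rewrite Hsym, (H2 T2 0), Rabs_right by lra; fold T3; field).
    replace (z v) with (z (T3 - (T3 - v))) by (f_equal; ring).
    replace (v + (T2 - T3)) with (T2 - (T3 - v)) by ring.
    apply (cat_m1_fan_le d _ _ _ _ _ r (T3 - v) HC Rz R2);
      rewrite ?(Hsym _ (e1 0)), ?H2, ?Rabs_right; fold T3; lra. }
  assert (B1 : exp (v - (T1 + T3) / 2) <= exp (r / 2) * exp ((v - T1) / 2)).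
  { rewrite <- exp_plus. apply exp_le_exp_of_le. apply Rabs_le_between in HT31. lra. }
  assert (B2 : exp (T3 - v - (T3 + T2) / 2) <= exp (r / 2) * exp (- v / 2)).
  { rewrite <- exp_plus. apply exp_le_exp_of_le. apply Rabs_le_between in HT23. lra. }
  pose proof (Cfan_ge_0 r).
  pose proof (Htri (e1 v) (z v) (e2 (v + (T2 - T3)))).
  apply Rmult_le_compat_l with (r := Cfan r) in B1, B2; auto. lra.
Qed.

Lemma cat_m1_shadow e1 e2 T1 T2 r :
  inSH d e1 -> inSH d e2 -> 0 <= T1 -> 0 <= T2 -> 0 <= r ->
  d (e1 0) (e2 0) <= r -> d (e1 T1) (e2 T2) <= r ->
  exists c, Rabs c <= r /\ Rabs (T2 - c - T1) <= r /\
    forall v, d (e1 v) (e2 (v + c)) <= Kshadow r * (exp (- v / 2) + exp ((v - T1) / 2)).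
Proof.
  intros H1 H2 HT1 HT2 Hr Hp Hq.
  pose proof HC as [HM [HG _]].
  destruct (HG (e1 0) (e2 T2)) as [z Gz].
  destruct (inSH_diagonal_bounds d e1 e2 T1 T2 r HM H1 H2 HT1 HT2 Hp Hq) as [HT23 HT31].
  set (T3 := d (e1 0) (e2 T2)) in *.
  exists (T2 - T3). split; [exact HT23|]. split.
  { replace (T2 - (T2 - T3) - T1) with (T3 - T1) by ring. exact HT31. }
  intros v.
  pose proof (proj1 (Rabs_le_between _ _) HT23); pose proof (proj1 (Rabs_le_between _ _) HT31).
  assert (HE : 0 <= exp (- v / 2) /\ 0 <= exp ((v - T1) / 2)) by (split; left; apply exp_pos).
  assert (HK : 0 <= (2 * r + 4) * exp r /\ 0 <= Cfan r * exp (r / 2)).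
  { pose proof (exp_pos r); pose proof (exp_pos (r / 2)); pose proof (Cfan_ge_0 r). split; nra. }
  unfold Kshadow.
  (* Outside the range where both fans of [cat_m1_shadow_middle] apply, [v] is within [r] of
     [0] or of [T1], and the triangle inequality suffices. *)
  destruct (Rlt_dec v (Rmax 0 (T3 - T2))) as [Hlow | Hlow];
    [|destruct (Rlt_dec (Rmin T1 T3) v) as [Hhigh | Hhigh]].
  - assert (Hv : v <= r) by (pose proof (Rmax_lub 0 (T3 - T2) r ltac:(lra) ltac:(lra)); lra).
    assert (d (e1 v) (e2 (v + (T2 - T3))) <= 2 * r + 2 * Rabs v).
    { eapply Rle_trans; [apply (inSH_dist_le d e1 e2 v _ 0 0); auto|].
      rewrite Rminus_0_r, Rminus_0_l, Rabs_Ropp.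
      pose proof (Rabs_triang v (T2 - T3)). lra. }
    pose proof (linear_le_exp_half r v Hr Hv). nra.
  - assert (Hv : T1 - v <= r) by (pose proof (Rmin_glb T1 T3 (T1 - r) ltac:(lra) ltac:(lra)); lra).
    assert (d (e1 v) (e2 (v + (T2 - T3))) <= 2 * r + 2 * Rabs (T1 - v)).
    { eapply Rle_trans; [apply (inSH_dist_le d e1 e2 v _ T1 T2); auto|].
      replace (T2 - (v + (T2 - T3))) with ((T3 - T1) + (T1 - v)) by ring.
      rewrite Rabs_minus_sym. pose proof (Rabs_triang (T3 - T1) (T1 - v)). lra. }
    pose proof (linear_le_exp_half r (T1 - v) Hr Hv).
    replace (- (T1 - v) / 2) with ((v - T1) / 2) in * by field. nra.
  - apply Rnot_lt_le in Hlow, Hhigh.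
    pose proof (Rmax_l 0 (T3 - T2)); pose proof (Rmax_r 0 (T3 - T2)).
    pose proof (Rmin_l T1 T3); pose proof (Rmin_r T1 T3).
    eapply Rle_trans; [apply (cat_m1_shadow_middle e1 e2 z T1 T2 r v); auto; fold T3; lra|]. nra.
Qed.

End Shadowing.

(** * The distance on SH *)

Lemma is_RInt_exp_half S x y :
  is_RInt (fun u => S * exp (u / 2)) x y (2 * S * (exp (y / 2) - exp (x / 2))).
Proof.
  replace (2 * S * (exp (y / 2) - exp (x / 2)))
    with (minus (2 * S * exp (y / 2)) (2 * S * exp (x / 2)))
    by (unfold minus, plus, opp; simpl; ring).
  apply (is_RInt_derive (fun u => 2 * S * exp (u / 2))).
  - intros u _. auto_derive; [exact I | unfold Rdiv; field].
  - intros u _. apply (ex_derive_continuous (fun u => S * exp (u / 2))). auto_derive. exact I.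
Qed.

Lemma is_RInt_exp_neg_half S x y :
  is_RInt (fun u => S * exp (- u / 2)) x y (2 * S * (exp (- x / 2) - exp (- y / 2))).
Proof.
  replace (2 * S * (exp (- x / 2) - exp (- y / 2)))
    with (minus (-2 * S * exp (- y / 2)) (-2 * S * exp (- x / 2)))
    by (unfold minus, plus, opp; simpl; ring).
  apply (is_RInt_derive (fun u => -2 * S * exp (- u / 2))).
  - intros u _. auto_derive; [exact I | unfold Rdiv; field].
  - intros u _. apply (ex_derive_continuous (fun u => S * exp (- u / 2))). auto_derive. exact I.
Qed.

Lemma is_RInt_exp_pair B a T : 0 < a ->
  is_RInt (fun s => B * (exp (a * (- s / 2)) + exp (a * ((s - T) / 2)))) 0 T
    (4 * B / a * (1 - exp (a * (- T / 2)))).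
Proof.
  intros Ha.
  replace (4 * B / a * (1 - exp (a * (- T / 2)))) with
    (minus (2 * B / a * (exp (a * ((T - T) / 2)) - exp (a * (- T / 2))))
           (2 * B / a * (exp (a * ((0 - T) / 2)) - exp (a * (- 0 / 2))))).
  - apply (is_RInt_derive (fun s => 2 * B / a * (exp (a * ((s - T) / 2)) - exp (a * (- s / 2))))).
    + intros s _. auto_derive; [exact I|]. unfold Rdiv, Rminus. field. lra.
    + intros s _. apply (ex_derive_continuous
        (fun s => B * (exp (a * (- s / 2)) + exp (a * ((s - T) / 2))))).
      auto_derive. exact I.
  - unfold minus, plus, opp; simpl.
    replace (a * ((T - T) / 2)) with 0 by field. replace (a * (- 0 / 2)) with 0 by field.
    replace (a * ((0 - T) / 2)) with (a * (- T / 2)) by field. rewrite exp_0. field. lra.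
Qed.

Lemma exp_neg_half_small S eps : 0 <= S -> 0 < eps ->
  exists M, 0 <= M /\ 4 * S * exp (- M / 2) < eps.
Proof.
  intros HS He. exists (8 * S / eps). split; [apply Rle_mult_inv_pos; lra|].
  set (y := exp (8 * S / eps / 2)).
  assert (Hy : 1 + 4 * S / eps <= y).
  { unfold y. replace (8 * S / eps / 2) with (4 * S / eps) by (field; lra).
    apply exp_ineq1_le. }
  assert (4 * S / eps * eps = 4 * S) by (field; lra).
  replace (- (8 * S / eps) / 2) with (- (8 * S / eps / 2)) by (field; lra).
  rewrite exp_Ropp. fold y. assert (0 < y) by apply exp_pos.
  apply Rmult_lt_reg_r with y; [lra|]. rewrite Rmult_assoc, Rinv_l by lra.
  assert (0 <= 4 * S / eps) by (apply Rle_mult_inv_pos; lra). nra.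
Qed.

Section ExpDominatedIntegral.

Variables (h : R -> R) (S : R).
Hypothesis h_cont : forall u, continuous h u.
Hypothesis h_ge_0 : forall u, 0 <= h u.
Hypothesis h_le : forall u, h u <= S * exp (- Rabs u / 2).

Let ex_RInt_h a b : ex_RInt h a b.
Proof. apply (@ex_RInt_continuous R_CompleteNormedModule). intros; apply h_cont. Qed.

Let S_ge_0 : 0 <= S.
Proof. pose proof (h_le 0); pose proof (h_ge_0 0); pose proof (exp_pos (- Rabs 0 / 2)). nra. Qed.

Let RInt_h_tail_r x y : 0 <= x <= y -> RInt h x y <= 2 * S * exp (- x / 2).
Proof.
  intros Hxy. rewrite <- (Rminus_0_r (2 * S * exp (- x / 2))).
  assert (0 <= 2 * S * exp (- y / 2)) by (pose proof (exp_pos (- y / 2)); nra).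
  apply Rle_trans with (2 * S * (exp (- x / 2) - exp (- y / 2))); [|nra].
  rewrite <- (is_RInt_unique _ _ _ _ (is_RInt_exp_neg_half S x y)).
  apply RInt_le; [lra | apply ex_RInt_h | eexists; apply is_RInt_exp_neg_half|].
  intros u Hu. rewrite <- (Rabs_right u) at 2 by lra. apply h_le.
Qed.

Let RInt_h_tail_l x y : x <= y <= 0 -> RInt h x y <= 2 * S * exp (y / 2).
Proof.
  intros Hxy.
  assert (0 <= 2 * S * exp (x / 2)) by (pose proof (exp_pos (x / 2)); nra).
  apply Rle_trans with (2 * S * (exp (y / 2) - exp (x / 2))); [|nra].
  rewrite <- (is_RInt_unique _ _ _ _ (is_RInt_exp_half S x y)).
  apply RInt_le; [lra | apply ex_RInt_h | eexists; apply is_RInt_exp_half|].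
  intros u Hu. replace (u / 2) with (- Rabs u / 2) by (rewrite Rabs_left1 by lra; field).
  apply h_le.
Qed.

Let Rabs_RInt_h_tail M x y : 0 <= M -> (M <= x /\ M <= y \/ x <= - M /\ y <= - M) ->
  Rabs (RInt h x y) <= 2 * S * exp (- M / 2).
Proof.
  intros HM Hxy.
  assert (Hle : forall a b, a <= b -> (M <= a \/ b <= - M) ->
            Rabs (RInt h a b) <= 2 * S * exp (- M / 2)).
  { intros a b Hab Hend. rewrite Rabs_right by (apply Rle_ge, RInt_ge_0; auto).
    destruct Hend.
    - eapply Rle_trans; [apply RInt_h_tail_r; lra|].
      apply Rmult_le_compat_l; [lra | apply exp_le_exp_of_le; lra].
    - eapply Rle_trans; [apply RInt_h_tail_l; lra|].
      apply Rmult_le_compat_l; [lra | apply exp_le_exp_of_le; lra]. }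
  destruct (Rle_dec x y).
  - apply Hle; lra.
  - rewrite <- (opp_RInt_swap h) by auto. unfold opp; simpl. rewrite Rabs_Ropp.
    apply Hle; lra.
Qed.

Let RInt_h_le a b : a <= 0 <= b -> RInt h a b <= 4 * S.
Proof.
  intros Hab. rewrite <- (RInt_Chasles h a 0 b) by auto. unfold plus; simpl.
  pose proof (RInt_h_tail_l a 0 ltac:(lra)); pose proof (RInt_h_tail_r 0 b ltac:(lra)).
  replace (0 / 2) with 0 in * by field. replace (- 0 / 2) with 0 in * by field.
  rewrite exp_0 in *. lra.
Qed.

Lemma is_RInt_gen_exp_dominated :
  exists l, is_RInt_gen h (Rbar_locally m_infty) (Rbar_locally p_infty) l /\ l <= 4 * S.
Proof.
  assert (Hlim : exists l : R, filterlim (fun ab : R * R => RInt h (fst ab) (snd ab))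
             (filter_prod (Rbar_locally m_infty) (Rbar_locally p_infty)) (locally l)).
  { apply (filterlim_locally_cauchy (U := R_CompleteSpace)). intros eps.
    destruct (exp_neg_half_small S eps S_ge_0 (cond_pos eps)) as [M [HM HMe]].
    exists (fun ab : R * R => fst ab < - M /\ M < snd ab). split.
    - apply (Filter_prod _ _ _ (fun x => x < - M) (fun y => M < y)); [exists (- M) | exists M|];
        auto.
    - intros [a b] [a' b'] [Ha Hb] [Ha' Hb']. simpl in *.
      change (Rabs (RInt h a' b' - RInt h a b) < eps).
      rewrite <- (RInt_Chasles h a' a b'), <- (RInt_Chasles h a b b') by auto.
      unfold plus; simpl.
      replace (RInt h a' a + (RInt h a b + RInt h b b') - RInt h a b)
        with (RInt h a' a + RInt h b b') by ring.
      pose proof (Rabs_RInt_h_tail M a' a HM ltac:(lra)).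
      pose proof (Rabs_RInt_h_tail M b b' HM ltac:(lra)).
      pose proof (Rabs_triang (RInt h a' a) (RInt h b b')). lra. }
  destruct Hlim as [l Hl]. exists l. split.
  - eapply filterlimi_lim_ext; [|exact Hl].
    intros [a b]. apply (RInt_correct h a b), ex_RInt_h.
  - apply (closed_filterlim_loc _ (fun x => x <= 4 * S) l Hl); [|apply closed_le].
    apply (Filter_prod _ _ _ (fun x => x < 0) (fun y => 0 < y)); [exists 0 | exists 0|];
      auto.
    intros a b Ha Hb. apply RInt_h_le. simpl. lra.
Qed.

End ExpDominatedIntegral.

Lemma continuous_of_lipschitz (f : R -> R) K x : 0 <= K ->
  (forall y, Rabs (f y - f x) <= K * Rabs (y - x)) -> continuous f x.
Proof.
  intros HK Hf. apply filterlim_locally. intros eps.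
  assert (Hd : 0 < eps / (K + 1)) by (apply Rdiv_lt_0_compat; [apply cond_pos | lra]).
  exists (mkposreal _ Hd). intros y Hy.
  change (Rabs (y - x) < eps / (K + 1)) in Hy. change (Rabs (f y - f x) < eps).
  apply Rlt_div_r in Hy; [|lra].
  pose proof (Hf y); pose proof (Rabs_pos (y - x)). nra.
Qed.

Lemma inSH_gflow {X} (d : X -> X -> R) t g : inSH d g -> inSH d (gflow t g).
Proof. intros Hg s u. unfold gflow. rewrite Hg. f_equal. ring. Qed.

Lemma gflow_plus {X} s c (g : R -> X) : gflow (s + c) g = gflow s (gflow c g).
Proof. apply functional_extensionality. intros u. unfold gflow. f_equal. ring. Qed.

Lemma continuous_dist_inSH {X} (d : X -> X -> R) g1 g2 x : is_metric d ->
  inSH d g1 -> inSH d g2 -> continuous (fun u => d (g1 u) (g2 u)) x.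
Proof.
  intros HM H1 H2. apply continuous_of_lipschitz with 2; [lra|]. intros y.
  eapply Rle_trans; [apply Rabs_dist_sub_le, HM|]. rewrite H1, H2. lra.
Qed.

(* The majorant [S * exp (- |u| / 2)] has total mass [4 * S]. *)
Lemma distSH_le {X} (d : X -> X -> R) g1 g2 S : is_metric d -> inSH d g1 -> inSH d g2 ->
  (forall u, d (g1 u) (g2 u) * exp (- Rabs u) <= S * exp (- Rabs u / 2)) ->
  distSH d g1 g2 <= 2 * S.
Proof.
  intros HM H1 H2 HS.
  set (h := fun u => d (g1 u) (g2 u) * exp (- Rabs u)).
  assert (h_cont : forall u, continuous h u).
  { intros u. apply (continuous_mult (K := R_AbsRing) (fun u => d (g1 u) (g2 u))).
    - apply continuous_dist_inSH; auto.
    - apply continuous_exp_comp, (continuous_opp (fun u => Rabs u)), continuous_Rabs. }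
  assert (h_ge_0 : forall u, 0 <= h u).
  { intros u. destruct HM as [Hpos _]. pose proof (Hpos (g1 u) (g2 u)).
    pose proof (exp_pos (- Rabs u)). unfold h. nra. }
  destruct (is_RInt_gen_exp_dominated h S h_cont h_ge_0 HS) as [l [Hl Hle]].
  unfold distSH. fold h. rewrite (is_RInt_gen_unique h l Hl). lra.
Qed.

Lemma distSH_gflow_le {X} (d : X -> X -> R) g t t' : is_metric d -> inSH d g ->
  distSH d (gflow t g) (gflow t' g) <= 2 * Rabs (t - t').
Proof.
  intros HM Hg. apply distSH_le; auto using inSH_gflow.
  intros u. unfold gflow. rewrite Hg. replace (u + t - (u + t')) with (t - t') by ring.
  apply Rmult_le_compat_l; [apply Rabs_pos | apply exp_le_exp_of_le].
  pose proof (Rabs_pos u). lra.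
Qed.

Lemma exp_shift_weight_le y u : exp (y + u / 2) * exp (- Rabs u) <= exp y * exp (- Rabs u / 2).
Proof. rewrite <- !exp_plus. apply exp_le_exp_of_le. pose proof (Rle_abs u). lra. Qed.

Lemma distSH_gflow_shadow_le {X} (d : X -> X -> R) e1 e2 K T s : is_metric d -> 0 <= K ->
  inSH d e1 -> inSH d e2 ->
  (forall v, d (e1 v) (e2 v) <= K * (exp (- v / 2) + exp ((v - T) / 2))) ->
  distSH d (gflow s e1) (gflow s e2) <= 2 * (K * (exp (- s / 2) + exp ((s - T) / 2))).
Proof.
  intros HM HK H1 H2 Hd. apply distSH_le; auto using inSH_gflow. intros u. unfold gflow.
  eapply Rle_trans; [apply Rmult_le_compat_r; [left; apply exp_pos | apply Hd]|].
  pose proof (exp_shift_weight_le (- s / 2) (- u)) as W1. rewrite Rabs_Ropp in W1.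
  pose proof (exp_shift_weight_le ((s - T) / 2) u) as W2.
  replace (- s / 2 + - u / 2) with (- (u + s) / 2) in W1 by field.
  replace ((s - T) / 2 + u / 2) with ((u + s - T) / 2) in W2 by field.
  nra.
Qed.

(** * Hölder potentials along the geodesic flow *)

Lemma rpow_ge_0 x a : 0 <= rpow x a.
Proof. unfold rpow. destruct (Rle_dec x 0); [lra | left; apply exp_pos]. Qed.

Lemma rpow_le_compat x y a : 0 < a -> x <= y -> rpow x a <= rpow y a.
Proof.
  intros Ha Hxy. unfold rpow. destruct (Rle_dec x 0), (Rle_dec y 0).
  - lra.
  - left; apply exp_pos.
  - lra.
  - apply Rle_Rpower_l; lra.
Qed.

Lemma rpow_lt_of_lt a eps x : 0 < a -> 0 < eps -> x < Rpower eps (/ a) -> rpow x a < eps.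
Proof.
  intros Ha He Hx. unfold rpow. destruct (Rle_dec x 0); [lra|].
  apply Rlt_le_trans with (Rpower (Rpower eps (/ a)) a); [apply Rlt_Rpower_l; lra|].
  rewrite Rpower_mult, Rinv_l, Rpower_1; lra.
Qed.

Lemma rpow_mul_exp a C y : 0 < C -> rpow (C * exp y) a = Rpower C a * exp (a * y).
Proof.
  intros HC. pose proof (exp_pos y). unfold rpow. destruct (Rle_dec (C * exp y) 0); [nra|].
  unfold Rpower. rewrite ln_mult, ln_exp, <- exp_plus by auto. f_equal. ring.
Qed.

Section HolderAlongFlow.

Variables (X : Type) (d : X -> X -> R) (Phi : (R -> X) -> R) (a L : R).
Hypothesis HM : is_metric d.
Hypothesis Ha : 0 < a.
Hypothesis HL : 0 <= L.
Hypothesis HPhi : holder_SH d Phi a L.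

Lemma continuous_holder_gflow g t : inSH d g -> continuous (fun s => Phi (gflow s g)) t.
Proof.
  intros Hg. apply filterlim_locally. intros eps.
  assert (He : 0 < eps / (L + 1)) by (apply Rdiv_lt_0_compat; [apply cond_pos | lra]).
  set (delta := Rpower (eps / (L + 1)) (/ a)).
  assert (Hd : 0 < delta / 2) by (apply Rdiv_lt_0_compat; [apply exp_pos | lra]).
  exists (mkposreal _ Hd). intros y Hy. change (Rabs (y - t) < delta / 2) in Hy.
  change (Rabs (Phi (gflow y g) - Phi (gflow t g)) < eps).
  eapply Rle_lt_trans; [apply HPhi; apply inSH_gflow, Hg|].
  assert (Hr : rpow (distSH d (gflow y g) (gflow t g)) a < eps / (L + 1)).
  { apply rpow_lt_of_lt; auto. fold delta. pose proof (distSH_gflow_le d g y t HM Hg). lra. }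
  apply Rlt_div_r in Hr; [|lra].
  pose proof (rpow_ge_0 (distSH d (gflow y g) (gflow t g)) a); pose proof (cond_pos eps). nra.
Qed.

Lemma ex_RInt_holder_gflow g x y : inSH d g -> ex_RInt (fun s => Phi (gflow s g)) x y.
Proof.
  intros Hg. apply (@ex_RInt_continuous R_CompleteNormedModule).
  intros t _. apply continuous_holder_gflow, Hg.
Qed.

End HolderAlongFlow.

Lemma Rabs_RInt_le_const (f : R -> R) M x y : (forall a b, ex_RInt f a b) ->
  (forall t, Rabs (f t) <= M) -> Rabs (RInt f x y) <= M * Rabs (y - x).
Proof.
  intros Hex Hb. rewrite Rmult_comm.
  destruct (Rle_dec x y).
  - rewrite (Rabs_right (y - x)) by lra. apply abs_RInt_le_const; auto.
  - rewrite <- opp_RInt_swap by auto. unfold opp; simpl. rewrite Rabs_Ropp, (Rabs_left (y - x)) by lra.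
    replace (- (y - x)) with (x - y) by ring. apply abs_RInt_le_const; auto; lra.
Qed.

Section HolderShadow.

Variables (X : Type) (d : X -> X -> R) (Phi : (R -> X) -> R) (a L K T : R).
Hypothesis HM : is_metric d.
Hypothesis Ha : 0 < a.
Hypothesis HK : 0 < K.
Hypothesis HL : 0 <= L.
Hypothesis HPhi : holder_SH d Phi a L.
Variables e1 e2 : R -> X.
Hypothesis H1 : inSH d e1.
Hypothesis H2 : inSH d e2.
Hypothesis Hshadow : forall v, d (e1 v) (e2 v) <= K * (exp (- v / 2) + exp ((v - T) / 2)).

Lemma holder_gflow_shadow_le s :
  Rabs (Phi (gflow s e1) - Phi (gflow s e2)) <=
  L * Rpower (4 * K) a * (exp (a * (- s / 2)) + exp (a * ((s - T) / 2))).
Proof.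
  eapply Rle_trans; [apply HPhi; apply inSH_gflow; auto|].
  pose proof (distSH_gflow_shadow_le d e1 e2 K T s HM (Rlt_le _ _ HK) H1 H2 Hshadow) as Hdist.
  rewrite Rmult_assoc. apply Rmult_le_compat_l; [exact HL|].
  pose proof (exp_pos (a * (- s / 2))); pose proof (exp_pos (a * ((s - T) / 2))).
  assert (Rpower (4 * K) a > 0) by apply exp_pos.
  (* Bound the sum of the two exponentials by twice the larger one. *)
  destruct (Rle_dec (exp (- s / 2)) (exp ((s - T) / 2))).
  - eapply Rle_trans; [apply rpow_le_compat with (y := 4 * K * exp ((s - T) / 2)); nra|].
    rewrite rpow_mul_exp by lra. nra.
  - eapply Rle_trans; [apply rpow_le_compat with (y := 4 * K * exp (- s / 2)); nra|].
    rewrite rpow_mul_exp by lra. nra.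
Qed.

Lemma Rabs_RInt_holder_gflow_shadow_le : 0 <= T ->
  Rabs (RInt (fun s => Phi (gflow s e1)) 0 T - RInt (fun s => Phi (gflow s e2)) 0 T)
    <= 4 * (L * Rpower (4 * K) a) / a.
Proof.
  intros HT. set (B := L * Rpower (4 * K) a).
  set (f1 := fun s => Phi (gflow s e1)). set (f2 := fun s => Phi (gflow s e2)).
  set (m := fun s => B * (exp (a * (- s / 2)) + exp (a * ((s - T) / 2)))).
  pose proof (is_RInt_exp_pair B a T Ha) as Hm. fold m in Hm.
  assert (HB : 0 <= B) by (apply Rmult_le_pos; [exact HL | left; apply exp_pos]).
  assert (Hex : forall (e : R -> X) x y, inSH d e -> ex_RInt (fun s => Phi (gflow s e)) x y)
    by (intros; apply (ex_RInt_holder_gflow X d Phi a L); auto).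
  assert (Hcont : forall t, continuous (fun s => minus (f1 s) (f2 s)) t).
  { intros t. apply (continuous_minus (V := R_NormedModule) f1 f2);
      apply (continuous_holder_gflow X d Phi a L); auto. }
  rewrite <- (RInt_minus (V := R_CompleteNormedModule) f1 f2) by (unfold f1, f2; apply Hex; auto).
  eapply Rle_trans; [apply abs_RInt_le; [exact HT | apply (@ex_RInt_continuous R_CompleteNormedModule); auto]|].
  eapply Rle_trans; [apply RInt_le with (g := m); auto; [| eexists; exact Hm |]|].
  - apply (@ex_RInt_continuous R_CompleteNormedModule). intros t _.
    apply (continuous_Rabs_comp (fun s => minus (f1 s) (f2 s))), Hcont.
  - intros s _. apply holder_gflow_shadow_le.
  - rewrite (is_RInt_unique _ _ _ _ Hm). pose proof (exp_pos (a * (- T / 2))).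
    assert (0 <= 4 * B / a) by (apply Rle_mult_inv_pos; lra). nra.
Qed.

End HolderShadow.

Lemma RInt_shift (f : R -> R) c a b : ex_RInt f a b ->
  RInt (fun s => f (s + c)) (a - c) (b - c) = RInt f a b.
Proof.
  intros Hf. pose proof (RInt_comp_lin f 1 c (a - c) (b - c)) as E.
  replace (1 * (a - c) + c) with a in E by ring. replace (1 * (b - c) + c) with b in E by ring.
  rewrite <- E by exact Hf. apply RInt_ext. intros x _.
  unfold scal; simpl. unfold mult; simpl. rewrite !Rmult_1_l. reflexivity.
Qed.

Lemma Kshadow_pos r : 0 <= r -> 0 < Kshadow r.
Proof.
  intros Hr. unfold Kshadow. pose proof (exp_pos r); pose proof (exp_pos (r / 2)).
  pose proof (Cfan_ge_0 r). nra.
Qed.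

Definition Dbound (a L r : R) : R := 4 * (L * Rpower (4 * Kshadow r) a) / a + 2 * r * L.

Lemma Rabs_RInt_holder_gflow_sub_le {X} (d : X -> X -> R) (Phi : (R -> X) -> R) a L :
  CAT_m1 d -> 0 < a -> holder_SH d Phi a L -> (forall g, inSH d g -> Rabs (Phi g) <= L) ->
  forall e1 e2 T1 T2 r, inSH d e1 -> inSH d e2 -> 0 <= T1 -> 0 <= T2 -> 0 <= r ->
  d (e1 0) (e2 0) <= r -> d (e1 T1) (e2 T2) <= r ->
  Rabs (RInt (fun s => Phi (gflow s e1)) 0 T1 - RInt (fun s => Phi (gflow s e2)) 0 T2)
    <= Dbound a L r.
Proof.
  intros HC Ha HPhi Hbd e1 e2 T1 T2 r H1 H2 HT1 HT2 Hr Hp Hq.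
  (* Shift [e2] by [c] so that it shadows [e1]; the integrals over [[0, T1]] are then compared
     pointwise, and the leftover pieces [[- c, 0]] and [[T1, T2 - c]] have length at most [r]. *)
  pose proof HC as [HM _].
  assert (HL : 0 <= L) by (pose proof (Hbd e1 H1); pose proof (Rabs_pos (Phi e1)); lra).
  destruct (cat_m1_shadow X d HC e1 e2 T1 T2 r H1 H2 HT1 HT2 Hr Hp Hq)
    as [c [Hc [HcT Hshadow]]].
  set (e2' := gflow c e2). assert (H2' : inSH d e2') by (apply inSH_gflow, H2).
  set (g := fun s => Phi (gflow s e2')).
  assert (Hex : forall e x y, inSH d e -> ex_RInt (fun s => Phi (gflow s e)) x y)
    by (intros; apply (ex_RInt_holder_gflow X d Phi a L); auto).
  assert (Hsplit : RInt (fun s => Phi (gflow s e2)) 0 T2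
                   = RInt g (- c) 0 + (RInt g 0 T1 + RInt g T1 (T2 - c))).
  { transitivity (RInt g (- c) (T2 - c)).
    - rewrite <- (RInt_shift _ c 0 T2), Rminus_0_l by auto.
      apply RInt_ext. intros s _. unfold g, e2'. rewrite gflow_plus. reflexivity.
    - rewrite <- (RInt_Chasles g (- c) 0 (T2 - c)), <- (RInt_Chasles g 0 T1 (T2 - c))
        by (unfold g; auto).
      reflexivity. }
  assert (Hbd' : forall t, Rabs (g t) <= L) by (intros; apply Hbd, inSH_gflow, H2').
  assert (B1 : Rabs (RInt g (- c) 0) <= L * r).
  { eapply Rle_trans; [apply Rabs_RInt_le_const; [unfold g; auto | exact Hbd']|].
    rewrite Rminus_0_l, Ropp_involutive. apply Rmult_le_compat_l; auto. }
  assert (B2 : Rabs (RInt g T1 (T2 - c)) <= L * r).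
  { eapply Rle_trans; [apply Rabs_RInt_le_const; [unfold g; auto | exact Hbd']|].
    apply Rmult_le_compat_l; auto. }
  assert (B3 := Rabs_RInt_holder_gflow_shadow_le X d Phi a L (Kshadow r) T1 HM Ha
                  (Kshadow_pos r Hr) HL HPhi e1 e2' H1 H2' Hshadow HT1).
  fold g in B3. rewrite Hsplit. unfold Dbound.
  apply Rabs_le. apply Rabs_le_between in B1, B2, B3. lra.
Qed.

Lemma dPhi_RInt {X} (d : X -> X -> R) Phi p q : is_metric d ->
  dPhi d Phi p q = RInt (fun t => Phi (gflow t (gamma_pq d p q))) 0 (d p q).
Proof.
  intros (_ & Hzero & _). unfold dPhi.
  destruct (excluded_middle_informative (p = q)) as [<- | _]; [|reflexivity].
  rewrite (proj2 (Hzero p p) eq_refl), RInt_point. reflexivity.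
Qed.

Lemma gamma_pq_spec {X} (d : X -> X -> R) g t : inSH d g ->
  let gam := gamma_pq d (g 0) (g t) in
  inSH d gam /\ gam 0 = g 0 /\ gam (d (g 0) (g t)) = g t.
Proof.
  intros Hg. unfold gamma_pq. apply epsilon_spec.
  rewrite Hg. destruct (Rle_dec 0 t).
  - exists g. split; [exact Hg|]. split; [reflexivity|]. f_equal.
    rewrite Rabs_left1 by lra. ring.
  - exists (flip g). unfold flip. split; [|split].
    + intros s u. rewrite Hg. replace (- s - - u) with (- (s - u)) by ring. apply Rabs_Ropp.
    + rewrite Ropp_0. reflexivity.
    + f_equal. rewrite Rabs_right by lra. ring.
Qed.

Theorem corollary4p5 (X : Type) (d : X -> X -> R)
  (HCAT : CAT_m1 d) (Hext : geodesically_complete d)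
  (Phi : (R -> X) -> R) (L : R)
  (HPhi : in_calH d Phi)
  (Hhol : exists a, 0 < a <= 1 /\ holder_SH d Phi a L)
  (Hholhat : exists b, 0 < b <= 1 /\ holder_SH d (hatPhi Phi) b L)
  (Hbd : forall g, inSH d g -> Rabs (Phi g) <= L) :
  exists D : R -> R,
    forall (g1 g2 : R -> X), inSH d g1 -> inSH d g2 ->
    forall (r t1 t2 : R), 0 <= r ->
      d (g1 0) (g2 0) <= r -> d (g1 t1) (g2 t2) <= r ->
      Rabs (dPhi d Phi (g1 0) (g1 t1) - dPhi d Phi (g2 0) (g2 t2)) <= D r.
Proof.
  destruct Hhol as [a [Ha HholPhi]]. pose proof HCAT as [HM _].
  exists (Dbound a L). intros g1 g2 G1 G2 r t1 t2 Hr H0 H1.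
  rewrite !dPhi_RInt by exact HM.
  destruct (gamma_pq_spec d g1 t1 G1) as (I1 & A1 & B1).
  destruct (gamma_pq_spec d g2 t2 G2) as (I2 & A2 & B2).
  apply (Rabs_RInt_holder_gflow_sub_le d Phi a L HCAT (proj1 Ha) HholPhi Hbd); auto.
  - apply HM.
  - apply HM.
  - rewrite A1, A2. exact H0.
  - rewrite B1, B2. exact H1.
Qed.
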